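(* Let $(X,\sigma)$ be a one-sided subshift. If there is $z\in X$ such that the set $\{y\in X:(y,z)\in\mathrm{SProx}(\sigma)\}$ is uncountable, then $(X,\sigma)$ has a Cantor syndetically scrambled set.
   Context: A one-sided subshift is a nonempty closed $\sigma$-invariant subset of $\mathcal A^{\mathbb N_0}$ ($\mathcal A$ finite) with the left shift $\sigma$. $\mathrm{Asy}(\sigma)=\{(x,y):d(\sigma^nx,\sigma^ny)\to0\}$; $\mathrm{SProx}(\sigma)=\{(x,y):\{n:d(\sigma^nx,\sigma^ny)<\varepsilon\}$ syndetic for all $\varepsilon>0\}$, syndetic meaning meeting every subset of $\mathbb N$ with arbitrarily long runs of consecutive integers. A syndetically scrambled set is a set with at least two points all of whose distinct pairs lie in $\mathrm{SProx}(\sigma)\setminus\mathrm{Asy}(\sigma)$. A Cantor set is a nonempty compact perfect totally disconnected set. *)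

From mathcomp Require Import all_boot.
Set Implicit Arguments. Unset Strict Implicit. Unset Printing Implicit Defensive.

Section Shift.
Variable A : finType.

Definition seqA := nat -> A.

Definition shift (x : seqA) : seqA := fun n => x (n.+1).
Definition shiftn (n : nat) (x : seqA) : seqA := fun m => x (n + m).

(* x and y agree on the first k coordinates: the basic neighbourhoods of the
   product topology; for the standard metric d(x,y)=2^{-min{n : x n <> y n}},
   d(x,y) < 2^{-k} iff x,y agree on the first k+1 coordinates. *)
Definition agree (k : nat) (x y : seqA) : Prop := forall i, i < k -> x i = y i.

Definition shset := seqA -> Prop.

Definition is_open (U : shset) : Prop :=
  forall x, U x -> exists k, forall y, agree k x y -> U y.

Definition is_closed (X : shset) : Prop :=
  forall x, (forall k, exists y, X y /\ agree k x y) -> X x.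

Definition subshift (X : shset) : Prop :=
  (exists x, X x) /\ is_closed X /\ (forall x, X x -> X (shift x)).

Definition converges (u : nat -> seqA) (x : seqA) : Prop :=
  forall k, exists N, forall n, N <= n -> agree k (u n) x.

(* compactness (A^{N_0} is metrizable, so sequential compactness) *)
Definition is_compact (S : shset) : Prop :=
  forall u : nat -> seqA, (forall n, S (u n)) ->
    exists (phi : nat -> nat) (x : seqA),
      (forall n, phi n < phi n.+1) /\ S x /\ converges (fun n => u (phi n)) x.

Definition is_perfect (S : shset) : Prop :=
  forall x, S x -> forall k, exists y, S y /\ y <> x /\ agree k x y.

Definition is_connected (C : shset) : Prop :=
  forall U V : shset, is_open U -> is_open V ->
    (forall x, C x -> U x \/ V x) ->
    (forall x, C x -> U x -> V x -> False) ->
    (forall x, C x -> U x) \/ (forall x, C x -> V x).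

Definition is_totally_disconnected (S : shset) : Prop :=
  forall C : shset, (forall x, C x -> S x) -> is_connected C ->
    forall x y, C x -> C y -> x = y.

Definition is_Cantor (S : shset) : Prop :=
  (exists x, S x) /\ is_compact S /\ is_perfect S /\ is_totally_disconnected S.

Definition thick (T : nat -> Prop) : Prop :=
  forall L, exists m, 1 <= m /\ forall i, i < L -> T (m + i).
Definition syndetic (S : nat -> Prop) : Prop :=
  forall T, (forall n, T n -> 1 <= n) -> thick T -> exists n, 1 <= n /\ S n /\ T n.

Definition Asy (x y : seqA) : Prop :=
  forall k, exists N, forall n, N <= n -> agree k (shiftn n x) (shiftn n y).

Definition SProx (x y : seqA) : Prop :=
  forall k, syndetic (fun n => agree k (shiftn n x) (shiftn n y)).

Definition synd_scrambled (S : shset) : Prop :=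
  (exists x y, S x /\ S y /\ x <> y) /\
  (forall x y, S x -> S y -> x <> y -> SProx x y /\ ~ Asy x y).

Definition countable_set (S : shset) : Prop :=
  exists f : seqA -> nat, forall x y, S x -> S y -> f x = f y -> x = y.

End Shift.

From mathcomp Require Import all_boot zify.
From Stdlib Require Import Classical ClassicalEpsilon FunctionalExtensionality.
Set Implicit Arguments. Unset Strict Implicit. Unset Printing Implicit Defensive.

(* Let Y be the uncountable set of points of X syndetically proximal to z.  An uncountable
   set always has two distinct blocks of coordinates, at any given position, whose classes
   are uncountable; iterating this, one builds a binary tree of uncountable subsets of Y
   whose 2^k nodes at level k pairwise differ on a new window of coordinates, and whose
   points all return j-close to z (for every j < k) with gaps bounded by a constant L_j,
   made uniform by the pigeonhole principle.  The branches converge in the closed set X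
   to a Cantor set; two of its points differ in every window, so they are not asymptotic,
   and since both return j-close to z within gaps L_j they are syndetically proximal. *)

Lemma fun_neq (T U : Type) (f g : T -> U) : f <> g -> exists t, f t <> g t.
Proof.
move=> Hfg; apply: NNPP => Hno; apply: Hfg; apply: functional_extensionality => t.
by apply: NNPP => Ht; apply: Hno; exists t.
Qed.

Section Agree.
Variable A : finType.
Implicit Types x y w : seqA A.

Lemma agree_sym k x y : agree k x y -> agree k y x.
Proof. by move=> H i Hi; rewrite H. Qed.

Lemma agree_trans k x y w : agree k x y -> agree k y w -> agree k x w.
Proof. by move=> Hxy Hyw i Hi; rewrite Hxy // Hyw. Qed.

Lemma agree_le k k' x y : k <= k' -> agree k' x y -> agree k x y.
Proof. by move=> Hk H i Hi; apply: H; lia. Qed.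

End Agree.

Section Countability.
Variable A : finType.
Implicit Types V W : shset A.

Definition uncountable_set V := ~ countable_set V.

Lemma countable_subset V W : (forall y, V y -> W y) -> countable_set W -> countable_set V.
Proof. by move=> HVW [f Hf]; exists f => x y Vx Vy; apply: Hf; apply: HVW. Qed.

Lemma uncountable_superset V W :
  (forall y, V y -> W y) -> uncountable_set V -> uncountable_set W.
Proof. by move=> HVW HV HW; apply: HV; apply: countable_subset HW. Qed.

Lemma countable_subsingleton V : (forall x y, V x -> V y -> x = y) -> countable_set V.
Proof. by move=> HV; exists (fun _ => 0) => x y Vx Vy _; apply: HV. Qed.

Lemma uncountable_inhabited V : uncountable_set V -> exists y, V y.
Proof.
move=> HV; apply: NNPP => Hno; apply: HV; apply: countable_subsingleton => x y Vx.
by case: Hno; exists x.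
Qed.

Lemma countable_fibers (T : countType) (c : seqA A -> T) V :
  (forall t, countable_set (fun y => V y /\ c y = t)) -> countable_set V.
Proof.
move=> /choice [F HF].
exists (fun y => pickle (c y, F (c y) y)) => x y Vx Vy /(pcan_inj pickleK) [Hc HFxy].
by apply: (HF (c x)); [split | split | rewrite HFxy Hc].
Qed.

Lemma uncountable_fiber (T : countType) (c : seqA A -> T) V :
  uncountable_set V -> exists t, uncountable_set (fun y => V y /\ c y = t).
Proof.
move=> HV; apply: NNPP => Hno; apply: HV; apply: (countable_fibers (c := c)) => t.
by apply: NNPP => Ht; apply: Hno; exists t.
Qed.

End Countability.

Section Blocks.
Variable A : finType.
Implicit Types (V W : shset A) (y : seqA A) (b c : seq A).

Definition block M l y : seq A := mkseq (fun i => y (M + i)) l.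

Definition with_block V M l b : shset A := fun y => V y /\ block M l y = b.

Lemma take_block M l l' y : l <= l' -> take l (block M l' y) = block M l y.
Proof. by move=> Hl; rewrite /block /mkseq -map_take take_iota (minn_idPl Hl). Qed.

Lemma eq_block M l y y' :
  block M l y = block M l y' <-> forall t, M <= t < M + l -> y t = y' t.
Proof.
split=> [Hb t Ht | Hwin].
  have HtM : t - M < l by lia.
  have := congr1 (nth (y 0) ^~ (t - M)) Hb.
  by rewrite /block !nth_mkseq // subnKC //; lia.
by apply/eq_in_map => i; rewrite mem_iota => Hi; apply: Hwin; lia.
Qed.

Lemma neq_block M l y y' : block M l y <> block M l y' ->
  exists2 t, M <= t < M + l & y t <> y' t.
Proof.
move=> Hne; apply: NNPP => Hno; apply: Hne; apply/eq_block => t Ht.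
by apply: NNPP => Hyt; apply: Hno; exists t.
Qed.

Lemma agree_block n l y y' :
  agree n y y' -> block n l y = block n l y' -> agree (n + l) y y'.
Proof.
move=> Hn /eq_block Hb t Ht; case: (ltnP t n) => Htn; first exact: Hn.
by apply: Hb; lia.
Qed.

Lemma refine_block V M l l' b : l <= l' -> uncountable_set (with_block V M l b) ->
  exists2 b', take l b' = b & uncountable_set (with_block V M l' b').
Proof.
move=> Hl Hb; have [b' Hb'] := uncountable_fiber (block M l') Hb.
exists b'; last by apply: uncountable_superset Hb' => y [[Vy _] Hy].
by have [y [[_ <-] <-]] := uncountable_inhabited Hb'; rewrite take_block.
Qed.

Lemma take_with_block V M l l' c b : l <= l' ->
  uncountable_set (with_block (with_block V M l c) M l' b) -> take l b = c.
Proof.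
by move=> Hl /uncountable_inhabited [y [[_ <-] <-]]; rewrite take_block.
Qed.

Lemma refine_family m (W : nat -> shset A) M l l' (b : nat -> seq A) : l <= l' ->
  (forall i, i < m -> uncountable_set (with_block (W i) M l (b i))) ->
  exists b' : nat -> seq A, forall i, i < m ->
    take l (b' i) = b i /\ uncountable_set (with_block (W i) M l' (b' i)).
Proof.
move=> Hl Hb; apply: (choice (fun i b' => i < m ->
  take l b' = b i /\ uncountable_set (with_block (W i) M l' b'))) => i.
case: (ltnP i m) => Hi; last by exists [::].
by have [b' ? ?] := refine_block Hl (Hb i Hi); exists b'.
Qed.

(* If only one block per length had an uncountable class, every point outside the
   "one-block branch" would lie in a countable class, and that branch has at most one
   point per prefix [block 0 M y]. *)
Lemma two_uncountable_blocks V M : uncountable_set V ->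
  exists l b1 b2, [/\ b1 <> b2, uncountable_set (with_block V M l b1)
                              & uncountable_set (with_block V M l b2)].
Proof.
move=> HV; apply: NNPP => Hno.
have uniq_class l b1 b2 : uncountable_set (with_block V M l b1) ->
    uncountable_set (with_block V M l b2) -> b1 = b2.
  by move=> H1 H2; apply: NNPP => Hne; apply: Hno; exists l, b1, b2.
have [beta Hbeta] := choice _ (fun l => uncountable_fiber (block M l) HV).
have [dev Hdev] : exists dev : seqA A -> option nat, forall y,
    if dev y is Some l then block M l y <> beta l else forall l, block M l y = beta l.
  apply: (choice (fun y (d : option nat) => if d is Some l then block M l y <> beta l
    else forall l, block M l y = beta l)) => y.
  case: (classic (forall l, block M l y = beta l)) => [Hy | /not_all_ex_not [l Hl]].
  - by exists None.
  - by exists (Some l).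
apply: HV; apply: (countable_fibers
  (c := fun y => (block 0 M y, omap (fun l => (l, block M l y)) (dev y)))) => -[w [[l b]|]].
- case: (classic (b = beta l)) => [Hb | Hb].
    apply: countable_subsingleton => x y [_ [_ Hx]]; move: (Hdev x) Hb.
    by case: (dev x) Hx => // l' [<- <-].
  have Hc : countable_set (with_block V M l b).
    by apply: NNPP => Hu; apply: Hb; apply: uniq_class Hu (Hbeta l).
  apply: countable_subset Hc => y [Vy [_ Hy]]; split=> //.
  by case: (dev y) Hy => // l' [<- <-].
- apply: countable_subsingleton => x y [_ [Hx Hdx]] [_ [Hy Hdy]].
  move: (Hdev x) (Hdev y); case: (dev x) Hdx => // _; case: (dev y) Hdy => // _ Ex Ey.
  apply: functional_extensionality => t; case: (ltnP t M) => Ht.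
    by move: Hx; rewrite -Hy => /eq_block; apply; lia.
  by have /eq_block := etrans (Ex t.+1) (esym (Ey t.+1)); apply; lia.
Qed.

(* To free the block [c] for [W m] when [W j] already uses it, split the class of
   [W j] at [c] into two uncountable sub-blocks and give [W j] one that [W m] does not
   use. *)
Lemma distinct_blocks m (W : nat -> shset A) M :
  (forall i, i < m -> uncountable_set (W i)) ->
  exists l (b : nat -> seq A),
    (forall i, i < m -> uncountable_set (with_block (W i) M l (b i))) /\
    (forall i j, i < m -> j < m -> b i = b j -> i = j).
Proof.
elim: m => [|m IH] HW; first by exists 0, (fun _ => [::]).
have [l [b [Hb Hinj]]] := IH (fun i Hi => HW i (ltnW Hi)).
have [c Hc] := uncountable_fiber (block M l) (HW m (ltnSn m)).
case: (classic (exists2 j, j < m & b j = c)) => [[j Hj Hbj] | Hnew]; last first.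
  exists l, (fun i => if i == m then c else b i); split.
    by move=> i Hi; case: eqP => [-> | /eqP Him] //; apply: Hb; lia.
  move=> i k Hi Hk; case: eqP => [-> | /eqP Him]; case: eqP => [-> | /eqP Hkm] //.
  - by move=> Hck; case: Hnew; exists k; [lia | rewrite Hck].
  - by move=> Hic; case: Hnew; exists i; [lia | rewrite Hic].
  - by apply: Hinj; lia.
subst c.
have [l1 [d1 [d2 [Hd Hd1 Hd2]]]] := two_uncountable_blocks M (Hb j Hj).
have [e1 He1 Hue1] := refine_block (leq_maxr l l1) Hd1.
have [e2 He2 Hue2] := refine_block (leq_maxr l l1) Hd2.
have [f Hf Huf] := refine_block (leq_maxl l l1) Hc.
have [b' Hb'] := refine_family (leq_maxl l l1) Hb.
pose e := if f == e1 then e2 else e1.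
have Hef : e <> f.
  rewrite /e; case: eqP => [-> He | Hne He]; last exact: Hne (esym He).
  by apply: Hd; rewrite -He1 -He2 He.
have Hue : uncountable_set (with_block (with_block (W j) M l (b j)) M (maxn l l1) e).
  by rewrite /e; case: eqP.
have Hte : take l e = b j := take_with_block (leq_maxl l l1) Hue.
exists (maxn l l1), (fun i => if i == m then f else if i == j then e else b' i); split.
  move=> i Hi; case: eqP => [-> // | /eqP Him]; case: eqP => [-> | /eqP Hij].
    by apply: uncountable_superset Hue => y [[]].
  by have [] := Hb' i ltac:(lia).
have prefix i : i <= m ->
    take l (if i == m then f else if i == j then e else b' i) = b (if i == m then j else i).
  move=> Hi; case: eqP => // /eqP Him; case: eqP => [-> // | /eqP Hij].
  by have [] := Hb' i ltac:(lia).
have prefix_lt i : i <= m -> (if i == m then j else i) < m.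
  by case: eqP => [_ _ // | /eqP Him Hi]; lia.
move=> i k Hi Hk Heq; have := Hinj _ _ (prefix_lt i Hi) (prefix_lt k Hk).
have := congr1 (take l) Heq; rewrite !prefix // => Hbp /(_ Hbp).
case: (eqVneq i m) Heq => [-> | Him]; case: (eqVneq k m) => [-> | Hkm] //= Heq.
- by move=> Hjk; subst k; case: Hef; move: Heq; rewrite eqxx.
- by move=> Hij; subst i; case: Hef; move: Heq; rewrite eqxx.
Qed.

End Blocks.

Section ReturnTimes.
Variable A : finType.
Implicit Types x y z : seqA A.

Definition returns_within L j y z :=
  forall a, 1 <= a -> exists2 n, a <= n < a + L & agree j (shiftn n y) (shiftn n z).

Lemma returns_within_le L L' j y z :
  L <= L' -> returns_within L j y z -> returns_within L' j y z.
Proof. by move=> HL Hy a Ha; have [n Hn Hag] := Hy a Ha; exists n => //; lia. Qed.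

(* Otherwise the times at which [y] is not [j]-close to [z] would form a thick set. *)
Lemma SProx_returns_within y z j : SProx y z -> exists L, returns_within L j y z.
Proof.
move=> Hyz; apply: NNPP => Hno.
pose far n := 1 <= n /\ ~ agree j (shiftn n y) (shiftn n z).
have [n [_ [Hclose [_ Hfar]]]] : exists n, 1 <= n /\ agree j (shiftn n y) (shiftn n z) /\ far n.
  apply: (Hyz j far) => [n [] // | L]; apply: NNPP => HL; apply: Hno; exists L => a Ha.
  apply: NNPP => Hna; apply: HL; exists a; split=> // i Hi; split; first lia.
  by move=> Hag; apply: Hna; exists (a + i) => //; lia.
exact: Hfar.
Qed.

(* In a run of length [L2 + L1] of a thick set, [x] is ([L1 + k])-close to [z] at some
   [n0], and [y] is [k]-close to [z] at some [n1] with [n0 <= n1 < n0 + L1]. *)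
Lemma returns_within_SProx x y z :
  (forall j, exists L, returns_within L j x z) ->
  (forall j, exists L, returns_within L j y z) -> SProx x y.
Proof.
move=> Hx Hy k T HT Hthick.
have [L1 HL1] := Hy k; have [L2 HL2] := Hx (L1 + k).
have [m [Hm Hrun]] := Hthick (L2 + L1).
have [n0 Hn0 Hx0] := HL2 m Hm.
have [n1 Hn1 Hy1] := HL1 n0 ltac:(lia).
exists n1; split; first lia; split; last first.
  by have := Hrun (n1 - m) ltac:(lia); rewrite subnKC //; lia.
move=> i Hi; have := Hy1 i Hi; rewrite /shiftn => ->.
by have := Hx0 (n1 - n0 + i) ltac:(lia); rewrite /shiftn addnA subnKC //; lia.
Qed.

End ReturnTimes.

Section UniformGaps.
Variables (A : finType) (z : seqA A).

Lemma uniform_return_gap (W : shset A) j : (forall y, W y -> SProx y z) ->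
  uncountable_set W -> exists L, uncountable_set (fun y => W y /\ returns_within L j y z).
Proof.
move=> HW Hu.
have [gap Hgap] : exists gap : seqA A -> nat,
    forall y, SProx y z -> returns_within (gap y) j y z.
  apply: (choice (fun y L => SProx y z -> returns_within L j y z)) => y.
  case: (classic (SProx y z)) => [/(SProx_returns_within j) [L HL] | Hy].
  - by exists L.
  - by exists 0.
have [L HL] := uncountable_fiber gap Hu.
by exists L; apply: uncountable_superset HL => y [Wy <-]; split=> //; apply/Hgap/HW.
Qed.

Lemma uniform_return_gap_family m (W : nat -> shset A) j :
  (forall i y, i < m -> W i y -> SProx y z) ->
  (forall i, i < m -> uncountable_set (W i)) ->
  exists L, forall i, i < m -> uncountable_set (fun y => W i y /\ returns_within L j y z).
Proof.
elim: m => [|m IH] HS HW; first by exists 0.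
have [L HL] := IH (fun i y Hi => HS i y (ltnW Hi)) (fun i Hi => HW i (ltnW Hi)).
have [L' HL'] := uniform_return_gap j (HS m ^~ (ltnSn m)) (HW m (ltnSn m)).
exists (maxn L L') => i Hi.
have [Lm Hm HLm] : exists2 Lm, Lm <= maxn L L' &
    uncountable_set (fun y => W i y /\ returns_within Lm j y z).
  case: (ltnP i m) => Him.
  - by exists L; [exact: leq_maxl | exact: HL].
  - have -> : i = m by lia.
    by exists L'; [exact: leq_maxr | exact: HL'].
by apply: uncountable_superset HLm => y [Wy Hy]; split=> //; apply: returns_within_le Hy.
Qed.

End UniformGaps.

(* The number written in binary by the first [k] bits of [s], most significant first:
   the index of the level-[k] node of the binary tree through which the branch [s]
   passes, the children of node [i] being [2i] and [2i + 1]. *)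
Fixpoint path_index (s : nat -> bool) k : nat :=
  if k is k'.+1 then s k' + (path_index s k').*2 else 0.

Lemma path_index_lt s k : path_index s k < 2 ^ k.
Proof. by elim: k => [|k IH] //=; rewrite expnS; case: (s k) => /=; lia. Qed.

Lemma path_index_half s k : (path_index s k.+1)./2 = path_index s k.
Proof. by rewrite /= half_bit_double. Qed.

Lemma eq_path_index s s' k :
  (forall i, i < k -> s i = s' i) -> path_index s k = path_index s' k.
Proof. by elim: k => [|k IH] Hss' //=; rewrite Hss' // IH // => i Hi; apply: Hss'; lia. Qed.

Lemma path_index_neq s s' j k : s j <> s' j -> j < k -> path_index s k <> path_index s' k.
Proof.
move=> Hj; elim: k => [|k IH] Hk //= Heq.
have Hhalf := congr1 half Heq; rewrite !half_bit_double in Hhalf.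
case: (ltnP j k) => Hjk; first exact: IH.
have Ekj : k = j by lia.
by move: Heq; rewrite Hhalf Ekj => /addIn; case: (s j) (s' j) Hj => [] [].
Qed.

Section CantorScheme.
Variables (A : finType) (X : shset A) (z : seqA A).

(* A level-[k] stage of the construction: its nodes [i < 2 ^ k] have centers [stage_node i]
   determined up to [stage_len], and [stage_gap j] (for [j < k]) bounds the gaps between
   the times at which the points of each node are [j]-close to [z]. *)
Record stage := Stage {
  stage_len : nat;
  stage_gap : nat -> nat;
  stage_node : nat -> seqA A }.

Definition node_set k st i : shset A := fun y =>
  [/\ X y, SProx y z, agree (stage_len st) y (stage_node st i)
    & forall j, j < k -> returns_within (stage_gap st j) j y z].

Definition good_stage k st := forall i, i < 2 ^ k -> uncountable_set (node_set k st i).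

Definition refines k st st' :=
  [/\ stage_len st < stage_len st',
      forall j, j < k -> stage_gap st' j = stage_gap st j,
      forall i, i < 2 ^ k.+1 ->
        agree (stage_len st) (stage_node st' i) (stage_node st i./2),
      forall i i', i < 2 ^ k.+1 -> i' < 2 ^ k.+1 -> i <> i' ->
        exists2 t, stage_len st <= t < stage_len st' &
                   stage_node st' i t <> stage_node st' i' t
    & good_stage k.+1 st'].

Lemma good_stage_refines k st : good_stage k st -> exists st', refines k st st'.
Proof.
move=> Hgood; set n := stage_len st.
pose W i := node_set k st i./2.
have HW i : i < 2 ^ k.+1 -> uncountable_set (W i).
  by move=> Hi; apply: Hgood; rewrite ltn_half_double -mul2n -expnS.
have [l [b [Hb Hinj]]] := distinct_blocks n HW.
have HS i y : i < 2 ^ k.+1 -> with_block (W i) n l (b i) y -> SProx y z by move=> _ [[]].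
have [L HL] := uniform_return_gap_family k HS Hb.
pose D i y := with_block (W i) n l (b i) y /\ returns_within L k y z.
have [c Hc] : exists c : nat -> seqA A, forall i, i < 2 ^ k.+1 -> D i (c i).
  apply: (choice (fun i y => i < 2 ^ k.+1 -> D i y)) => i.
  case: (ltnP i (2 ^ k.+1)) => Hi; last by exists z.
  by have [y Hy] := uncountable_inhabited (HL i Hi); exists y.
have H2 : 1 < 2 ^ k.+1 by rewrite expnS; have := expn_gt0 2 k; lia.
have Hl : 0 < l.
  case: (posnP l) => // Hl0; exfalso.
  have [[_ Hb0] _] := Hc 0 (ltnW H2); have [[_ Hb1] _] := Hc 1 H2.
  suff : 0 = 1 by [].
  by apply: Hinj => //; first lia; rewrite -Hb0 -Hb1 Hl0.
exists (Stage (n + l) (fun j => if j == k then L else stage_gap st j) c); split=> /=.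
- lia.
- by move=> j Hj; case: eqP => // Hjk; lia.
- by move=> i Hi; have [[[_ _ Hag _] _] _] := Hc i Hi.
- move=> i i' Hi Hi' Hii'; have [[_ Hbi] _] := Hc i Hi; have [[_ Hbi'] _] := Hc i' Hi'.
  by apply: neq_block; rewrite Hbi Hbi' => /(Hinj _ _ Hi Hi').
- move=> i Hi; apply: uncountable_superset (HL i Hi) => y [[[Xy Sy Hag Hret] Hby] HLy].
  have [[[_ _ Hagc _] Hbc] _] := Hc i Hi.
  split=> //=.
  + by apply: agree_block; [exact: agree_trans Hag (agree_sym Hagc) | rewrite Hby Hbc].
  + by move=> j Hj; case: eqP => [-> // | Hjk]; apply: Hret; lia.
Qed.

Definition next_stage k st :=
  epsilon (inhabits st) (fun st' => good_stage k st -> refines k st st').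

Lemma next_stage_refines k st : good_stage k st -> refines k st (next_stage k st).
Proof.
move=> Hgood; have [st' Hst'] := good_stage_refines Hgood.
exact: (epsilon_spec (inhabits st) _ (ex_intro _ st' (fun _ => Hst'))).
Qed.

Fixpoint stage_at k : stage :=
  if k is k'.+1 then next_stage k' (stage_at k') else Stage 0 (fun _ => 0) (fun _ => z).

Hypothesis Hunc : uncountable_set (fun y => X y /\ SProx y z).

Lemma stage_at_good k : good_stage k (stage_at k).
Proof.
elim: k => [|k IH].
  by move=> i _; apply: uncountable_superset Hunc => y [Xy Sy]; split.
by case: (next_stage_refines IH).
Qed.

Lemma stage_at_refines k : refines k (stage_at k) (stage_at k.+1).
Proof. exact: next_stage_refines (@stage_at_good k). Qed.

Local Notation len k := (stage_len (stage_at k)).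
Local Notation gap k := (stage_gap (stage_at k)).
Local Notation node k := (stage_node (stage_at k)).

Definition cantor_map (s : nat -> bool) : seqA A := fun t => node t.+1 (path_index s t.+1) t.

Lemma len_mono : {homo (fun k => len k) : k k' / k <= k'}.
Proof.
apply: homo_leq leqnn leq_trans _ => k.
by case: (stage_at_refines k) => /ltnW.
Qed.

Lemma len_ge k : k <= len k.
Proof. by elim: k => [|k IH] //; case: (stage_at_refines k) => Hlt _ _ _ _; lia. Qed.

Lemma gap_stable j k : j < k -> gap k j = gap j.+1 j.
Proof.
elim: k => [|k IH] // Hjk; case: (ltnP j k) => Hj; last by have -> : k = j by lia.
by case: (stage_at_refines k) => _ Hgap _ _ _; rewrite Hgap // IH.
Qed.

Lemma node_prefix s k k' : k <= k' ->
  agree (len k) (node k' (path_index s k')) (node k (path_index s k)).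
Proof.
elim: k' => [|k' IH] Hk; first by move: Hk; rewrite leqn0 => /eqP ->.
case: (ltnP k k'.+1) => Hkk'; last by have -> : k = k'.+1 by lia.
case: (stage_at_refines k') => _ _ Hchild _ _.
have := Hchild _ (path_index_lt s k'.+1); rewrite path_index_half => Hag.
by apply: agree_trans (IH Hkk'); apply: agree_le Hag; apply: len_mono.
Qed.

Lemma cantor_map_agree s k : agree (len k) (cantor_map s) (node k (path_index s k)).
Proof.
move=> t Ht.
have Ht1 : t < len t.+1 by have := len_ge t.+1; lia.
rewrite /cantor_map -(@node_prefix s _ _ (leq_maxr k t.+1) _ Ht1).
exact: (@node_prefix s _ _ (leq_maxl k t.+1) _ Ht).
Qed.

Lemma cantor_map_close s s' k : (forall i, i < k -> s i = s' i) ->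
  agree (len k) (cantor_map s) (cantor_map s').
Proof.
move=> Hss'; apply: agree_trans (@cantor_map_agree s k) _.
by rewrite (eq_path_index Hss'); apply/agree_sym/cantor_map_agree.
Qed.

Lemma cantor_map_approx s k : exists y, [/\ X y, agree (len k) (cantor_map s) y
  & forall j, j < k -> returns_within (gap k j) j y z].
Proof.
have [y [Xy _ Hag Hret]] := uncountable_inhabited (stage_at_good (path_index_lt s k)).
exists y; split=> //.
exact: agree_trans (@cantor_map_agree s k) (agree_sym Hag).
Qed.

Lemma cantor_map_in_closed s : is_closed X -> X (cantor_map s).
Proof.
move=> HX; apply: HX => k; have [y [Xy Hag _]] := cantor_map_approx s k.
by exists y; split=> //; apply: agree_le Hag; apply: len_ge.
Qed.

(* The return time of a nearby point of a late enough stage is inherited by the limit. *)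
Lemma cantor_map_returns s j : returns_within (gap j.+1 j) j (cantor_map s) z.
Proof.
move=> a Ha; set k := (a + gap j.+1 j + j).+1.
have [y [_ Hag Hret]] := cantor_map_approx s k.
have [n Hn Hclose] := Hret j ltac:(lia) a Ha; rewrite gap_stable in Hn; last lia.
exists n => // i Hi; rewrite -(Hclose i Hi); apply: Hag.
by have := len_ge k; rewrite /k; lia.
Qed.

Lemma cantor_map_far s s' j N : s j <> s' j ->
  exists2 t, N <= t & cantor_map s t <> cantor_map s' t.
Proof.
move=> Hj; set k := N + j.+1.
have Hjk : j < k.+1 by rewrite /k; lia.
have HNk : N <= k by rewrite /k; lia.
case: (stage_at_refines k) => _ _ _ Hsplit _.
have [t Ht Hne] := Hsplit _ _ (path_index_lt s k.+1) (path_index_lt s' k.+1)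
  (path_index_neq Hj Hjk).
exists t; first by have := len_ge k; lia.
have Htk : t < len k.+1 by lia.
by rewrite (@cantor_map_agree s _ _ Htk) (@cantor_map_agree s' _ _ Htk).
Qed.

End CantorScheme.

Lemma cantor_scheme (A : finType) (X : shset A) (z : seqA A) :
  is_closed X -> uncountable_set (fun y => X y /\ SProx y z) ->
  exists (phi : (nat -> bool) -> seqA A) (L : nat -> nat),
    [/\ forall s, X (phi s),
        forall s j, returns_within (L j) j (phi s) z,
        forall s s' k, (forall i, i < k -> s i = s' i) -> agree k (phi s) (phi s')
      & forall s s' j N, s j <> s' j -> exists2 t, N <= t & phi s t <> phi s' t].
Proof.
move=> HX Hunc; exists (cantor_map X z), (fun j => stage_gap (stage_at X z j.+1) j); split.
- by move=> s; apply: cantor_map_in_closed.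
- by move=> s j; apply: cantor_map_returns.
- by move=> s s' k Hss'; apply: agree_le (cantor_map_close Hunc Hss'); apply: len_ge.
- by move=> s s' j N; apply: cantor_map_far.
Qed.

Section CantorSpaceCompact.
Variable u : nat -> nat -> bool.

Definition frequent_prefix k (g : nat -> bool) :=
  forall N, exists2 n, N <= n & forall i, i < k -> u n i = g i.

Definition set_bit (g : nat -> bool) k b := fun i => if i == k then b else g i.

Lemma frequent_prefix_ext k g :
  frequent_prefix k g -> exists b, frequent_prefix k.+1 (set_bit g k b).
Proof.
move=> Hg; apply: NNPP => Hno.
have Hbound b : exists N, forall n, N <= n ->
    ~ forall i, i < k.+1 -> u n i = set_bit g k b i.
  apply: NNPP => Hb; apply: Hno; exists b => N; apply: NNPP => HN; apply: Hb.
  by exists N => n Hn Hall; apply: HN; exists n.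
have [N0 H0] := Hbound false; have [N1 H1] := Hbound true.
have [n Hn Hpre] := Hg (maxn N0 N1).
have Hext : forall i, i < k.+1 -> u n i = set_bit g k (u n k) i.
  by move=> i Hi; rewrite /set_bit; case: eqP => [-> | Hik] //; apply: Hpre; lia.
by case: (u n k) Hext; [apply: H1 | apply: H0]; lia.
Qed.

Definition next_prefix k g :=
  epsilon (inhabits g) (fun g' => frequent_prefix k g ->
    frequent_prefix k.+1 g' /\ forall i, i < k -> g' i = g i).

Fixpoint prefix_at k : nat -> bool :=
  if k is k'.+1 then next_prefix k' (prefix_at k') else fun _ => false.

Lemma next_prefix_spec k g : frequent_prefix k g ->
  frequent_prefix k.+1 (next_prefix k g) /\ forall i, i < k -> next_prefix k g i = g i.
Proof.
move=> Hg; have [b Hb] := frequent_prefix_ext Hg.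
have Hex : exists g', frequent_prefix k g ->
    frequent_prefix k.+1 g' /\ forall i, i < k -> g' i = g i.
  by exists (set_bit g k b) => _; split=> // i Hi; rewrite /set_bit; case: eqP => //; lia.
exact: (epsilon_spec (inhabits g) _ Hex Hg).
Qed.

Lemma prefix_at_frequent k : frequent_prefix k (prefix_at k).
Proof. by elim: k => [N | k IH]; [exists N | case: (next_prefix_spec IH)]. Qed.

Lemma prefix_at_stable i k : i < k -> prefix_at k i = prefix_at i.+1 i.
Proof.
elim: k => [|k IH] // Hi; case: (ltnP i k) => Hik; last by have -> : i = k by lia.
have [_ Hstable] := next_prefix_spec (prefix_at_frequent k).
by rewrite [prefix_at k.+1]/= Hstable // IH.
Qed.

(* König's lemma for the binary tree. *)
Lemma cantor_space_compact : exists (phi : nat -> nat) (tau : nat -> bool),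
  (forall n, phi n < phi n.+1) /\ forall n i, i < n -> u (phi n) i = tau i.
Proof.
pose tau i := prefix_at i.+1 i.
have Hfreq k N : exists n, N <= n /\ forall i, i < k -> u n i = tau i.
  have [n Hn Hpre] := prefix_at_frequent k N.
  by exists n; split=> // i Hi; rewrite Hpre // prefix_at_stable.
have [pick Hpick] := choice _ (fun k => choice _ (Hfreq k)).
pose fix phi n := if n is n'.+1 then pick n (phi n').+1 else 0.
exists phi, tau; split=> [n | [|n] i Hi //]; first by case: (Hpick n.+1 (phi n).+1).
by case: (Hpick n.+1 (phi n).+1) => _; apply.
Qed.

End CantorSpaceCompact.

Lemma totally_disconnected (A : finType) (S : shset A) : is_totally_disconnected S.
Proof.
move=> C _ HC x y Cx Cy; apply: NNPP => Hxy; have [i Hi] := fun_neq Hxy.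
pose U (w : seqA A) := w i = x i.
have HU : is_open U by move=> w Hw; exists i.+1 => w' Hag; rewrite /U -Hag.
have HnU : is_open (fun w => ~ U w) by move=> w Hw; exists i.+1 => w' Hag; rewrite /U -Hag.
case: (HC U _ HU HnU) => [w _ | w _ | HCU | HCnU].
- exact: classic.
- by [].
- by apply: Hi; rewrite (HCU y Cy).
- exact: HCnU x Cx erefl.
Qed.

Section CantorSchemeRange.
Variables (A : finType) (phi : (nat -> bool) -> seqA A).
Hypothesis phi_close :
  forall s s' k, (forall i, i < k -> s i = s' i) -> agree k (phi s) (phi s').
Hypothesis phi_far :
  forall s s' j N, s j <> s' j -> exists2 t, N <= t & phi s t <> phi s' t.

Definition range_set : shset A := fun x => exists s, x = phi s.

Lemma phi_neq s s' : s <> s' -> phi s <> phi s'.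
Proof.
by move=> Hss' Heq; have [j Hj] := fun_neq Hss'; have [t _] := phi_far 0 Hj; rewrite Heq.
Qed.

Lemma range_compact : is_compact range_set.
Proof.
move=> u /(choice _) [s Hs].
have [sub [tau [Hsub Htau]]] := cantor_space_compact s.
exists sub, (phi tau); split=> //; split; first by exists tau.
move=> k; exists k => n Hn; rewrite Hs.
by apply: phi_close => i Hi; apply: Htau; lia.
Qed.

Lemma range_perfect : is_perfect range_set.
Proof.
move=> _ [s ->] k; pose s' := set_bit s k (~~ s k).
have Hs' : s' k <> s k by rewrite /s' /set_bit eqxx; case: (s k).
exists (phi s'); split; first by exists s'.
split; first by apply: phi_neq => Heq; apply: Hs'; rewrite Heq.
by apply: phi_close => i Hi; rewrite /s' /set_bit; case: eqP => // Hik; lia.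
Qed.

Lemma range_Cantor : is_Cantor range_set.
Proof.
split; first by exists (phi (fun _ => false)), (fun _ => false).
by split; [exact: range_compact | split; [exact: range_perfect | exact: totally_disconnected]].
Qed.

Lemma range_synd_scrambled z (L : nat -> nat) :
  (forall s j, returns_within (L j) j (phi s) z) -> synd_scrambled range_set.
Proof.
move=> Hret; split.
  exists (phi (fun _ => false)), (phi (fun _ => true)); split; first by exists (fun _ => false).
  split; first by exists (fun _ => true).
  by apply: phi_neq => /(congr1 (fun f => f 0)).
move=> _ _ [s ->] [s' ->] Hne; split.
  by apply: (returns_within_SProx (z := z)) => j; exists (L j); apply: Hret.
move=> Hasy; have [j Hj] : exists j, s j <> s' j.
  by apply: fun_neq => Hss'; apply: Hne; rewrite Hss'.
have [N HN] := Hasy 1; have [t Ht Hneq] := phi_far N Hj.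
by apply: Hneq; have := HN t Ht 0 (ltnSn 0); rewrite /shiftn addn0.
Qed.

End CantorSchemeRange.

Theorem proposition3p5 (A : finType) (X : shset A) :
  subshift X ->
  (exists z, X z /\ ~ countable_set (fun y => X y /\ SProx y z)) ->
  exists S : shset A,
    (forall x, S x -> X x) /\ is_Cantor S /\ synd_scrambled S.
Proof.
move=> [_ [HX _]] [z [_ Hunc]].
have [phi [L [HX_phi Hret Hclose Hfar]]] := cantor_scheme HX Hunc.
exists (range_set phi); split; first by move=> _ [s ->].
by split; [exact: range_Cantor | exact: range_synd_scrambled Hret].
Qed.
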